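(* Let $\mathcal{O}$ be the ring of integers of $\mathbb{Q}(\sqrt{-11})$ and $X=\frac12(1+\sqrt{-11})$. Then: (i) $X$ is an $\mathbb{S}[\pm1]$-generator of $\mathcal{O}$, i.e. every element of $\mathcal{O}$ can be written uniquely as a finite sum $\sum_j\alpha_jX^j$ with $\alpha_j\in\{-1,0,1\}$, and its hold is given by $1+1=-1+X-X^2$; (ii) with $R_m=\mathcal{O}/X^m\mathcal{O}$, the projective limit $\varprojlim_m R_m$ is the ring $W(\mathbb{F}_3)=\mathbb{Z}_3$.
   Context: $W(\mathbb{F}_3)$ is the ring of $3$-typical Witt vectors of $\mathbb{F}_3$, identified with the $3$-adic integers $\mathbb{Z}_3$. The hold records, for each $\xi\in\{\pm1\}$, the unique representation of $\xi+1$ as such a sum; here the only nontrivial case is $1+1$. *)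

From HB Require Import structures.
From mathcomp Require Import all_boot all_order all_algebra all_field.
Set Implicit Arguments. Unset Strict Implicit. Unset Printing Implicit Defensive.
Import Order.TTheory GRing.Theory Num.Theory.
Local Open Scope ring_scope.

Definition sqrtm11 : algC := sqrtC (- 11%:R).
Definition Xg : algC := (1 + sqrtm11) / 2%:R.

Definition inQsqrtm11 (z : algC) : Prop :=
  exists p q : rat, z = ratr p + ratr q * sqrtm11.

Definition inO (z : algC) : Prop := z \in Aint /\ inQsqrtm11 z.

Definition is_digit (a : int) : bool := [|| a == 0, a == 1 | a == -1].

(* A finite digit string s = [:: a_0; ...; a_k] (with no trailing zero,
   so that it represents a finitely supported digit sequence uniquely)  *)
Definition digit_string (s : seq int) : Prop :=
  all is_digit s /\ last 1 s != 0.

Definition evalX (s : seq int) : algC :=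
  \sum_(j < size s) (s`_j)%:~R * Xg ^+ j.

Definition spm1_generator : Prop :=
  inO Xg /\
  (forall s, digit_string s -> inO (evalX s)) /\
  (forall z, inO z -> exists! s : seq int, digit_string s /\ z = evalX s).

Definition inXmO (m : nat) (z : algC) : Prop :=
  exists w, inO w /\ z = Xg ^+ m * w.

(* compatible families (x_m)_m, x_m in O representing a class of R_m,
   with x_{m+1} = x_m in R_m *)
Definition compatO (x : nat -> algC) : Prop :=
  (forall m, inO (x m)) /\ (forall m, inXmO m (x m.+1 - x m)).
Definition eqO (x y : nat -> algC) : Prop := forall m, inXmO m (x m - y m).

(* ---- Z_3 = W(F_3) = lim Z/3^m Z, via representatives ---- *)
Definition compatZ (x : nat -> int) : Prop :=
  forall m, (3%:Z ^+ m %| x m.+1 - x m)%Z.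
Definition eqZ (x y : nat -> int) : Prop :=
  forall m, (3%:Z ^+ m %| x m - y m)%Z.

(* f induces a ring isomorphism  lim_m O/X^mO  ->  Z_3
   (ring operations on the limits are componentwise) *)
Definition lim_ring_iso (f : (nat -> algC) -> (nat -> int)) : Prop :=
  (forall x, compatO x -> compatZ (f x)) /\
  (forall x y, compatO x -> compatO y -> eqO x y -> eqZ (f x) (f y)) /\
  (forall x y, compatO x -> compatO y ->
     eqZ (f (fun m => x m + y m)) (fun m => f x m + f y m)) /\
  (forall x y, compatO x -> compatO y ->
     eqZ (f (fun m => x m * y m)) (fun m => f x m * f y m)) /\
  eqZ (f (fun _ => 1)) (fun _ => 1) /\
  (forall x y, compatO x -> compatO y -> eqZ (f x) (f y) -> eqO x y) /\
  (forall z, compatZ z -> exists2 x, compatO x & eqZ (f x) z).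

From HB Require Import structures.
From mathcomp Require Import all_boot all_order all_algebra all_field.
From mathcomp Require Import ring zify.
From Stdlib Require Import ClassicalEpsilon.
Import Order.TTheory GRing.Theory Num.Theory.
Local Open Scope ring_scope.

(* O = Z[X] with X^2 = X - 3, so that 3 = X (1 - X) and a + b X has norm
   a^2 + a b + 3 b^2.  Choosing the digit d = a (mod 3) writes a nonzero
   a + b X as d + X w with w of smaller norm, so digit expansions exist by
   descent on the norm; they are unique because X divides an integer n in O
   only when 3 divides n.  More generally X^m O meets Z in 3^m Z (X and 1 - X
   are coprime), and every element of O is congruent to an integer modulo
   X^m, so O / X^m O = Z / 3^m Z compatibly in m, and the limits agree. *)

Lemma sqrtm11_sqr : sqrtm11 ^+ 2 = - 11%:R.
Proof. exact: sqrtCK. Qed.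

Lemma sqrtm11E : sqrtm11 = 2%:R * Xg - 1.
Proof. by rewrite /Xg; field. Qed.

Lemma Xg_sqr : Xg ^+ 2 = Xg - 3%:R.
Proof.
apply/eqP; rewrite -subr_eq0.
have -> : Xg ^+ 2 - (Xg - 3%:R) = (sqrtm11 ^+ 2 + 11%:R) / 4%:R by rewrite /Xg; field.
by rewrite sqrtm11_sqr addNr mul0r.
Qed.

Lemma three_Xg : 3%:R = Xg * (1 - Xg).
Proof. by rewrite mulrBr mulr1 -expr2 Xg_sqr opprB addrC subrK. Qed.

Lemma conj_sqrtm11 : sqrtm11^* = - sqrtm11.
Proof.
have : (sqrtm11^* - sqrtm11) * (sqrtm11^* + sqrtm11) = 0.
  by rewrite -subr_sqr -rmorphXn sqrtm11_sqr rmorphN rmorph_nat subrr.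
move/eqP; rewrite mulf_eq0 subr_eq0 addr_eq0 => /orP[/eqP sqrtm11_real | /eqP //].
have : sqrtm11 \is Num.real by rewrite CrealE sqrtm11_real.
by rewrite realEsqr sqrtm11_sqr oppr_ge0 lern0.
Qed.

Lemma conj_Xg : Xg^* = 1 - Xg.
Proof.
by rewrite /Xg fmorph_div rmorphD rmorph1 /= conj_sqrtm11 rmorph_nat; field.
Qed.

Lemma Xg_Aint : Xg \in Aint.
Proof.
apply: (@root_monic_Aint ('X^2 - ('X - (3%:R)%:P))).
- by rewrite /root !hornerE Xg_sqr subrr.
- by rewrite monicE lead_coefDl ?lead_coefXn // size_polyN size_XsubC size_polyXn.
- apply/polyOverP => i; rewrite !coefE.
  by case: ifP => _; rewrite !(rpredB, rpred_nat, rpred0).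
Qed.

Lemma sqrtm11_Aint : sqrtm11 \in Aint.
Proof. by rewrite sqrtm11E; apply/rpredB/rpred1/rpredM/Xg_Aint/rpred_nat. Qed.

Lemma intr_of_Crat_Aint (w : algC) :
  w \in Crat -> w \in Aint -> exists n : int, w = n%:~R.
Proof. by move=> wQ wA; apply/intrP/Cint_rat_Aint. Qed.

(* [11 B] and [(B sqrtm11)^2 = -11 B^2] are rational integers, so 11 divides
   [(11 B)^2], hence [11 B]. *)
Lemma intr_of_Crat_sqrtm11_Aint (B : algC) :
  B \in Crat -> B * sqrtm11 \in Aint -> exists b : int, B = b%:~R.
Proof.
move=> BQ BsA.
have [u Bu] : exists u : int, - 11%:R * B = u%:~R.
  apply: intr_of_Crat_Aint; first by rewrite rpredM ?rpredN ?rpred_nat.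
  have -> : - 11%:R * B = (B * sqrtm11) * sqrtm11.
    by rewrite -mulrA -expr2 sqrtm11_sqr mulrC.
  by rewrite rpredM // sqrtm11_Aint.
have [k Bk] : exists k : int, (B * sqrtm11) ^+ 2 = k%:~R.
  apply: intr_of_Crat_Aint; last exact: rpredX.
  by rewrite exprMn sqrtm11_sqr rpredM ?rpredX ?rpredN ?rpred_nat.
have uuk : u * u = -11 * k.
  apply: (@intr_inj algC); rewrite !intrM -Bu -Bk exprMn sqrtm11_sqr; ring.
have /dvdzP[b ub] : (11 %| u)%Z.
  have : (11 %| u * u)%Z by apply/dvdzP; exists (- k); lia.
  by rewrite !dvdzE abszM Euclid_dvdM // orbb.
exists (- b); apply: (@mulfI _ (- 11%:R)); first by rewrite oppr_eq0 pnatr_eq0.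
by rewrite Bu ub intrM intrN; ring.
Qed.

Lemma mul_coordsX (a b c d : int) :
  (a%:~R + b%:~R * Xg) * (c%:~R + d%:~R * Xg) =
  (a * c - 3 * b * d)%:~R + (a * d + b * c + b * d)%:~R * Xg.
Proof.
have -> : (a%:~R + b%:~R * Xg) * (c%:~R + d%:~R * Xg) =
  (a * c - 3 * b * d)%:~R + (a * d + b * c + b * d)%:~R * Xg
  + (b * d)%:~R * (Xg ^+ 2 - (Xg - 3%:R)) by ring.
by rewrite Xg_sqr subrr mulr0 addr0.
Qed.

Lemma sqr_ge1 {x : int} : x != 0 -> 1 <= x ^+ 2.
Proof. by rewrite expr2; nia. Qed.

Definition normX (a b : int) : int := a * a + a * b + 3 * b * b.

Lemma normX_mul4 a b : 4 * normX a b = (2 * a + b) ^+ 2 + 11 * b ^+ 2.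
Proof. by rewrite /normX; ring. Qed.

Lemma normX_ge0 a b : 0 <= normX a b.
Proof.
by have := normX_mul4 a b; have := sqr_ge0 (2 * a + b); have := sqr_ge0 b; lia.
Qed.

Lemma normX_gt0 a b : (a, b) != (0, 0) -> 0 < normX a b.
Proof.
rewrite xpair_eqE negb_and => nz.
have := normX_mul4 a b; have := sqr_ge0 (2 * a + b); have := sqr_ge0 b.
rewrite !expr2; nia.
Qed.

Lemma normX_digit_step [a b d : int] :
  is_digit d -> (3 %| a - d)%Z -> (a, b) != (0, 0) ->
  normX (a - d) b < 3 * normX a b.
Proof.
move=> + /dvdzP[q aE] nz; case/or3P => [/eqP d0 | /eqP d1 | /eqP d1].
  by move: (normX_gt0 a b nz); rewrite d0 subr0; lia.
all: have d2 : d ^+ 2 = 1 by rewrite d1.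
all: have dq : d + 2 * q != 0 by rewrite d1; lia.
all: have key : 2 * (3 * normX a b - normX (a - d) b) =
                (2 * a + b + d) ^+ 2 + 11 * b ^+ 2 - 3 * d ^+ 2 by rewrite /normX; ring.
all: rewrite d2 mulr1 in key.
all: have [b0|/sqr_ge1 b1] := eqVneq b 0; last by have := sqr_ge0 (2 * a + b + d); lia.
all: have e : 2 * a + b + d = 3 * (d + 2 * q) by rewrite b0; lia.
all: have := sqr_ge1 dq; rewrite e exprMn in key; lia.
Qed.

Lemma coordsX_eq0 [a b : int] : a%:~R + b%:~R * Xg = 0 -> a = 0 /\ b = 0.
Proof.
move=> ab0; have := mul_coordsX a b (a + b) (- b).
rewrite ab0 mul0r => /esym/eqP.
have -> : a * - b + b * (a + b) + b * - b = 0 by ring.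
rewrite mul0r addr0 intr_eq0 => /eqP nab0.
have [[-> ->] // | nz] := eqVneq (a, b) (0, 0).
by have := normX_gt0 a b nz; rewrite /normX; nia.
Qed.

Lemma coordsX_inj (a b c d : int) :
  a%:~R + b%:~R * Xg = c%:~R + d%:~R * Xg -> a = c /\ b = d.
Proof.
move=> E; have [] := @coordsX_eq0 (a - c) (b - d); last by lia.
by rewrite !intrB mulrBl addrACA E -opprD subrr.
Qed.

Lemma Xg_neq0 : Xg != 0.
Proof. by apply/eqP => X0; have [] := @coordsX_eq0 0 1; rewrite ?mul1r ?add0r. Qed.

Lemma inO_coordsP z : inO z <-> exists a b : int, z = a%:~R + b%:~R * Xg.
Proof.
split=> [[zA [p [q zE]]] | [a [b ->]]]; last first.
  split; first by apply/rpredD/rpredM/Xg_Aint; apply: Aint_int.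
  exists (a%:~R + b%:~R / 2%:R), (b%:~R / 2%:R).
  by rewrite !(rmorphD, fmorph_div, ratr_int, ratr_nat) sqrtm11E; field.
pose A : algC := ratr p - ratr q; pose B : algC := 2%:R * ratr q.
have AQ : A \in Crat by apply/rpredB; apply: Crat_rat.
have BQ : B \in Crat by apply/rpredM/Crat_rat/rpred_nat.
have {}zE : z = A + B * Xg by rewrite zE sqrtm11E /A /B; ring.
have [b Bb] : exists b : int, B = b%:~R.
  apply: intr_of_Crat_sqrtm11_Aint => //.
  have -> : B * sqrtm11 = z - z^*.
    by rewrite zE rmorphD rmorphM /= (conj_Crat AQ) (conj_Crat BQ) conj_Xg sqrtm11E; ring.
  by apply: rpredB; rewrite // Aint_aut.
have [a Aa] : exists a : int, A = a%:~R.
  apply: intr_of_Crat_Aint => //.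
  have -> : A = z - b%:~R * Xg by rewrite zE Bb addrK.
  by apply/rpredB/rpredM/Xg_Aint/Aint_int.
by exists a, b; rewrite zE Aa Bb.
Qed.

Lemma inO_int (n : int) : inO n%:~R.
Proof. by apply/inO_coordsP; exists n, 0; rewrite mul0r addr0. Qed.

Lemma inO_Xg : inO Xg.
Proof. by apply/inO_coordsP; exists 0, 1; rewrite mul1r add0r. Qed.

Lemma inO_add z w : inO z -> inO w -> inO (z + w).
Proof.
move=> /inO_coordsP[a [b ->]] /inO_coordsP[c [d ->]].
by apply/inO_coordsP; exists (a + c), (b + d); rewrite !intrD; ring.
Qed.

Lemma inO_opp z : inO z -> inO (- z).
Proof.
move=> /inO_coordsP[a [b ->]].
by apply/inO_coordsP; exists (- a), (- b); rewrite !intrN; ring.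
Qed.

Lemma inO_sub z w : inO z -> inO w -> inO (z - w).
Proof. by move=> zO /inO_opp; apply: inO_add. Qed.

Lemma inO_mul z w : inO z -> inO w -> inO (z * w).
Proof.
move=> /inO_coordsP[a [b ->]] /inO_coordsP[c [d ->]].
by apply/inO_coordsP; rewrite mul_coordsX; do 2 eexists.
Qed.

Lemma inO_exp z n : inO z -> inO (z ^+ n).
Proof.
move=> zO; elim: n => [|n IH]; first by rewrite expr0; apply: (inO_int 1).
by rewrite exprS; apply: inO_mul.
Qed.

Lemma inXmO0 m : inXmO m 0.
Proof. by exists 0; rewrite mulr0; split=> //; apply: (inO_int 0). Qed.

Lemma inXmO_add m z w : inXmO m z -> inXmO m w -> inXmO m (z + w).
Proof.
by move=> [u [uO ->]] [v [vO ->]]; exists (u + v); rewrite mulrDr; split=> //; apply: inO_add.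
Qed.

Lemma inXmO_sub m z w : inXmO m z -> inXmO m w -> inXmO m (z - w).
Proof.
by move=> [u [uO ->]] [v [vO ->]]; exists (u - v); rewrite mulrBr; split=> //; apply: inO_sub.
Qed.

Lemma inXmO_mull m c z : inO c -> inXmO m z -> inXmO m (c * z).
Proof.
by move=> cO [u [uO ->]]; exists (c * u); rewrite mulrCA; split=> //; apply: inO_mul.
Qed.

Lemma inXmO_le [j k : nat] [z : algC] : (j <= k)%N -> inXmO k z -> inXmO j z.
Proof.
move=> le_jk [u [uO ->]]; exists (Xg ^+ (k - j) * u).
by rewrite mulrA -exprD subnKC //; split=> //; apply/inO_mul/uO/inO_exp/inO_Xg.
Qed.

Lemma inXmO_dvdz m (n : int) : (3%:Z ^+ m %| n)%Z -> inXmO m n%:~R.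
Proof.
move=> /dvdzP[k ->]; rewrite intrM mulrC rmorphXn /= -pmulrn three_Xg exprMn -mulrA.
exists ((1 - Xg) ^+ m * k%:~R); split=> //.
by apply/inO_mul/inO_int/inO_exp/inO_sub/inO_Xg; apply: (inO_int 1).
Qed.

Lemma inXmO1_dvdz [n : int] : inXmO 1 n%:~R -> (3 %| n)%Z.
Proof.
move=> [w [/inO_coordsP[a [b ->]] nE]].
have : n%:~R + 0%:~R * Xg = (0 * a - 3 * 1 * b)%:~R + (0 * b + 1 * a + 1 * b)%:~R * Xg.
  by rewrite -mul_coordsX mul0r addr0 nE expr1 mul1r add0r.
by move/coordsX_inj => [-> _]; apply/dvdzP; exists (- b); lia.
Qed.

(* Writing [u = Xg * u + (1 - Xg) * u] gains one more factor [Xg] at each step. *)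
Lemma inXmO_cancel_1subX [m : nat] [u : algC] :
  inO u -> inXmO m ((1 - Xg) * u) -> inXmO m u.
Proof.
move=> uO Xm_u; suff : forall j, (j <= m)%N -> inXmO j u by apply.
elim=> [|j IH] le_jm; first by exists u; rewrite expr0 mul1r.
have [v [vO uE]] := IH (ltnW le_jm).
have [w [wO wE]] := inXmO_le le_jm Xm_u.
exists (v + w); split; first exact: inO_add.
have -> : u = Xg * u + (1 - Xg) * u by ring.
by rewrite wE {1}uE mulrA -exprS mulrDr.
Qed.

Lemma inXmO_intP m (n : int) : inXmO m n%:~R <-> (3%:Z ^+ m %| n)%Z.
Proof.
split; last exact: inXmO_dvdz.
elim: m n => [|m IH] n Xm_n; first by rewrite expr0 dvd1z.
have /dvdzP[n' nE] := inXmO1_dvdz (inXmO_le (isT : (1 <= m.+1)%N) Xm_n).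
suff /(inXmO_cancel_1subX (inO_int n'))/IH : inXmO m ((1 - Xg) * n'%:~R).
  by rewrite nE exprSr dvdz_mul2r.
have [w [wO wE]] := Xm_n; exists w; split=> //.
apply: (mulfI Xg_neq0); rewrite mulrA -three_Xg mulrA -exprS -wE nE intrM mulrC.
by rewrite -pmulrn.
Qed.

Lemma inXmO1_1subXn m : inXmO 1 (1 - (1 - Xg) ^+ m).
Proof.
elim: m => [|m IH]; first by rewrite expr0 subrr; apply: inXmO0.
have -> : 1 - (1 - Xg) ^+ m.+1 = (1 - (1 - Xg) ^+ m) + Xg ^+ 1 * (1 - Xg) ^+ m.
  by rewrite exprS expr1; ring.
apply: inXmO_add => //; exists ((1 - Xg) ^+ m); split=> //.
by apply/inO_exp/inO_sub/inO_Xg; apply: (inO_int 1).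
Qed.

(* If [Xg = c + Xg^m (a + b Xg)] then [c + 3^m a] works at level [m.+1], since
   [3^m = Xg^m (1 - Xg)^m] and [(1 - Xg)^m = 1] modulo [Xg]. *)
Lemma Xg_int_congr m : exists c : int, inXmO m (Xg - c%:~R).
Proof.
elim: m => [|m [c [w [/inO_coordsP[a [b wE]] cE]]]].
  by exists 0; exists Xg; rewrite expr0 mul1r subr0; split=> //; apply: inO_Xg.
have [w' [w'O w'E]] : inXmO 1 (w - (1 - Xg) ^+ m * a%:~R).
  have -> : w - (1 - Xg) ^+ m * a%:~R = a%:~R * (1 - (1 - Xg) ^+ m) + b%:~R * Xg.
    by rewrite wE; ring.
  apply: inXmO_add; first exact/inXmO_mull/inXmO1_1subXn/inO_int.
  by exists b%:~R; rewrite expr1 mulrC; split=> //; apply: inO_int.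
exists (c + 3%:Z ^+ m * a); exists w'; split=> //.
rewrite exprSr -mulrA -[Xg in Xg * w']expr1 -w'E intrD intrM rmorphXn /=.
by rewrite -pmulrn three_Xg exprMn mulrBr -cE; ring.
Qed.

Lemma inO_int_congr m z : inO z -> exists n : int, inXmO m (z - n%:~R).
Proof.
move=> /inO_coordsP[a [b ->]]; have [c Xc] := Xg_int_congr m.
exists (a + b * c); rewrite intrD intrM.
have -> : a%:~R + b%:~R * Xg - (a%:~R + b%:~R * c%:~R) = b%:~R * (Xg - c%:~R) by ring.
exact/inXmO_mull/Xc/inO_int.
Qed.

Lemma int_congr_eqmod m z (n1 n2 : int) :
  inXmO m (z - n1%:~R) -> inXmO m (z - n2%:~R) -> (3%:Z ^+ m %| n1 - n2)%Z.
Proof.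
move=> Xm_n1 Xm_n2; apply/inXmO_intP.
have -> : (n1 - n2)%:~R = (z - n2%:~R) - (z - n1%:~R) by rewrite intrB; ring.
exact: inXmO_sub.
Qed.

Lemma evalX_nil : evalX [::] = 0.
Proof. by rewrite /evalX big_ord0. Qed.

Lemma evalX_cons d s : evalX (d :: s) = d%:~R + Xg * evalX s.
Proof.
rewrite /evalX big_ord_recl /= expr0 mulr1 mulr_sumr; congr (_ + _).
by apply: eq_bigr => i _; rewrite exprS mulrCA.
Qed.

Lemma inO_evalX s : inO (evalX s).
Proof.
elim: s => [|d s IH]; first by rewrite evalX_nil; apply: (inO_int 0).
by rewrite evalX_cons; apply/inO_add/inO_mul/IH/inO_Xg; apply: inO_int.
Qed.

Lemma digit_string_cons d s :
  is_digit d -> digit_string s -> (s = [::] -> d != 0) -> digit_string (d :: s).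
Proof.
move=> dd [ss sl] ds; split; first by rewrite /= dd.
by case: s ds {ss} sl => [/(_ erefl)|].
Qed.

Lemma digit_string_consE [d s] : digit_string (d :: s) -> is_digit d /\ digit_string s.
Proof. by move=> [/= /andP[dd ss] sl]; split=> //; split=> //; case: s ss sl. Qed.

Lemma exists_digit (a : int) : exists2 d, is_digit d & (3 %| a - d)%Z.
Proof.
exists (((a + 1) %% 3)%Z - 1).
  have := modz_ge0 (a + 1) (isT : (3 : int) != 0).
  have := ltz_pmod (a + 1) (isT : (0 : int) < 3).
  by rewrite /is_digit; lia.
by apply/dvdzP; exists ((a + 1) %/ 3)%Z; have := divz_eq (a + 1) 3; lia.
Qed.

Lemma coordsX_digit_expansion (a b : int) :
  exists s, digit_string s /\ a%:~R + b%:~R * Xg = evalX s.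
Proof.
have [K] := ubnP `|normX a b|%N; elim: K a b => // K IH a b.
have [[-> ->] _ | nz lt_ab] := eqVneq (a, b) (0, 0).
  by exists [::]; rewrite evalX_nil mul0r addr0.
have [d dd ad] := exists_digit a; have [q aE] := dvdzP ad.
have abE : a%:~R + b%:~R * Xg = d%:~R + Xg * ((b + q)%:~R + (- q)%:~R * Xg).
  apply/eqP; rewrite -subr_eq0.
  have -> : a%:~R + b%:~R * Xg - (d%:~R + Xg * ((b + q)%:~R + (- q)%:~R * Xg)) =
            q%:~R * (Xg ^+ 2 - (Xg - 3%:R)) + (a - d - q * 3)%:~R.
    by rewrite !(intrD, intrB, intrM, intrN); ring.
  by rewrite Xg_sqr aE !subrr mulr0 add0r.
have [|s [ss sE]] := IH (b + q) (- q).
  have : normX (a - d) b = 3 * normX (b + q) (- q) by rewrite aE /normX; ring.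
  have := normX_digit_step dd ad nz; have := normX_ge0 (b + q) (- q).
  by move: lt_ab; lia.
exists (d :: s); split; last by rewrite evalX_cons -sE.
apply: digit_string_cons => // s0; apply: contra_neq nz => d0.
have ab0 : a%:~R + b%:~R * Xg = 0 by rewrite abE sE s0 d0 evalX_nil mulr0 addr0.
by have [-> ->] := coordsX_eq0 ab0.
Qed.

Lemma digit_eqmod3 d1 d2 : is_digit d1 -> is_digit d2 -> (3 %| d1 - d2)%Z -> d1 = d2.
Proof. by move=> /or3P[] /eqP-> /or3P[] /eqP-> /dvdzP[k]; lia. Qed.

Lemma digit_cons_inj [d1 d2 z1 z2] :
  is_digit d1 -> is_digit d2 -> inO z1 -> inO z2 ->
  d1%:~R + Xg * z1 = d2%:~R + Xg * z2 -> d1 = d2 /\ z1 = z2.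
Proof.
move=> d1d d2d z1O z2O E.
have d12 : d1 = d2.
  apply: digit_eqmod3 => //; apply: inXmO1_dvdz.
  exists (z2 - z1); rewrite expr1 mulrBr intrB; split; first exact: inO_sub.
  by rewrite -[d1%:~R](addrK (Xg * z1)) E; ring.
by split=> //; apply: (mulfI Xg_neq0); apply: (addrI d1%:~R); rewrite E d12.
Qed.

Lemma evalX_eq0 [s] : digit_string s -> evalX s = 0 -> s = [::].
Proof.
elim: s => [//|d s IH] sd sE0; have [dd ss] := digit_string_consE sd.
have [d0 s0] : d = 0 /\ evalX s = 0.
  apply: digit_cons_inj => //; [exact: inO_evalX | exact: (inO_int 0) |].
  by rewrite -evalX_cons sE0 mulr0 addr0.
by move: sd; rewrite d0 (IH ss s0) => -[_].
Qed.

Lemma evalX_inj s t : digit_string s -> digit_string t -> evalX s = evalX t -> s = t.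
Proof.
elim: s t => [|d s IH] [|d' t] sd td.
- by [].
- by rewrite evalX_nil => /esym/(evalX_eq0 td).
- by rewrite evalX_nil => /(evalX_eq0 sd).
have [[dd ss] [d'd tt]] := (digit_string_consE sd, digit_string_consE td).
rewrite !evalX_cons => E.
have [-> st] := digit_cons_inj dd d'd (inO_evalX s) (inO_evalX t) E.
by rewrite (IH t ss tt st).
Qed.

Lemma Xg_spm1_generator : spm1_generator.
Proof.
split; first exact: inO_Xg.
split=> [s _ | z /inO_coordsP[a [b ->]]]; first exact: inO_evalX.
have [s [ss sE]] := coordsX_digit_expansion a b.
by exists s; split=> // t [tt tE]; apply: evalX_inj; rewrite // -sE -tE.
Qed.

Lemma hold_one_add_one : (1 + 1 : algC) = evalX [:: -1; 1; -1].
Proof.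
by rewrite !evalX_cons evalX_nil mulr0 addr0 mulrDr mulrA -expr2 Xg_sqr; ring.
Qed.

Definition int_repr m z : int :=
  epsilon (inhabits 0) (fun n : int => inXmO m (z - n%:~R)).

Lemma int_reprP m z : inO z -> inXmO m (z - (int_repr m z)%:~R).
Proof. by move=> /(inO_int_congr m); apply: epsilon_spec. Qed.

Lemma int_repr_eqmod m z n :
  inO z -> inXmO m (z - n%:~R) -> (3%:Z ^+ m %| int_repr m z - n)%Z.
Proof. by move=> /(int_reprP m); apply: int_congr_eqmod. Qed.

Definition Z3_of_lim (x : nat -> algC) (m : nat) : int := int_repr m (x m).

Lemma lim_ring_iso_Z3_of_lim : lim_ring_iso Z3_of_lim.
Proof.
have reprP x m : compatO x -> inXmO m (x m - (Z3_of_lim x m)%:~R).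
  by move=> [xO _]; apply: int_reprP.
split.
  move=> x xc m; apply: (@int_congr_eqmod m (x m.+1)).
    exact/(inXmO_le (leqnSn m))/reprP.
  have -> : x m.+1 - (Z3_of_lim x m)%:~R =
            (x m.+1 - x m) + (x m - (Z3_of_lim x m)%:~R) by ring.
  by apply: inXmO_add; [case: xc | apply: reprP].
split.
  move=> x y [xO _] yc xy m; apply: int_repr_eqmod => //.
  have -> : x m - (Z3_of_lim y m)%:~R =
            (x m - y m) + (y m - (Z3_of_lim y m)%:~R) by ring.
  exact/inXmO_add/reprP.
split.
  move=> x y [xO _] [yO _] m; apply: int_repr_eqmod; first exact: inO_add.
  rewrite intrD; have -> : x m + y m - ((Z3_of_lim x m)%:~R + (Z3_of_lim y m)%:~R) =
    (x m - (Z3_of_lim x m)%:~R) + (y m - (Z3_of_lim y m)%:~R) by ring.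
  by apply: inXmO_add; apply: int_reprP.
split.
  move=> x y [xO _] [yO _] m; apply: int_repr_eqmod; first exact: inO_mul.
  rewrite intrM; have -> : x m * y m - (Z3_of_lim x m)%:~R * (Z3_of_lim y m)%:~R =
    y m * (x m - (Z3_of_lim x m)%:~R) +
    (Z3_of_lim x m)%:~R * (y m - (Z3_of_lim y m)%:~R) by ring.
  apply: inXmO_add; apply: inXmO_mull => //; try exact: int_reprP.
  exact: inO_int.
split.
  by move=> m; apply: int_repr_eqmod; [apply: (inO_int 1) | rewrite subrr; apply: inXmO0].
split.
  move=> x y xc yc xy m.
  have -> : x m - y m = (x m - (Z3_of_lim x m)%:~R) - (y m - (Z3_of_lim y m)%:~R)
                        + (Z3_of_lim x m - Z3_of_lim y m)%:~R by rewrite intrB; ring.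
  by apply: inXmO_add; [apply: inXmO_sub; apply: reprP | apply/inXmO_intP].
move=> z zc; exists (fun m => (z m)%:~R).
  by split=> m; [apply: inO_int | rewrite -intrB; apply/inXmO_intP].
by move=> m; apply: int_repr_eqmod; [apply: inO_int | rewrite subrr; apply: inXmO0].
Qed.

Theorem proposition6p6 :
  (* (i) X is an S[+-1]-generator of O, with hold 1 + 1 = -1 + X - X^2 *)
  (spm1_generator /\ (1 + 1 : algC) = evalX [:: -1; 1; -1]) /\
  (* (ii) lim_m O / X^m O is (isomorphic as a ring to) Z_3 = W(F_3) *)
  (exists f : (nat -> algC) -> (nat -> int), lim_ring_iso f).
Proof.
split; first exact: (conj Xg_spm1_generator hold_one_add_one).
by exists Z3_of_lim; apply: lim_ring_iso_Z3_of_lim.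
Qed.
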